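(* Every exact-repair regenerating code of type $(5,4,4)$ with parameters $(B,\alpha,\beta)$ satisfies \[ 5B\le 7\alpha+22\beta\;(=3B_1+2B_2-2\beta). \]
   Context: Fix integers $1\le k\le d\le n-1$. An exact-repair regenerating code of type $(n,k,d)$ with parameters $(B,\alpha,\beta)$ (nonnegative reals) is a collection of jointly distributed discrete random variables $M$, $W_j$ ($1\le j\le n$), $S_i^j$ ($1\le i,j\le n$, $i\neq j$) such that, with $H$ denoting Shannon entropy: $H(M)=B$; $H(W_j)=\alpha$ and $H(W_j\mid M)=0$ for all $j$; $H(M\mid W_J)=0$ for every $J\subseteq\{1,\dots,n\}$ with $|J|\ge k$; $H(S_i^j)=\beta$ and $H(S_i^j\mid W_i)=0$ for all $i\ne j$; and $H(W_j\mid S_I^j)=0$ for every $I\subseteq\{1,\dots,n\}\setminus\{j\}$ with $|I|\ge d$. Notation: for a set $J$, $W_J=(W_j)_{j\in J}$; $S_I^j=(S_i^j)_{i\in I}$. For $0\le q\le k$, $B_q=q\alpha+\binom{k-q}{2}\beta+(d+1-k)(k-q)\beta$; for $(n,k,d)=(5,4,4)$, $B_1=\alpha+6\beta$, $B_2=2\alpha+3\beta$. *)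

From Stdlib Require Import Reals List ClassicalEpsilon.
Open Scope R_scope.

(* A discrete probability space: WLOG the sample space is countable, taken to be nat,
   with point masses p. *)
Definition prob_space (p : nat -> R) : Prop :=
  (forall w, 0 <= p w) /\ infinite_sum p 1.

(* A discrete random variable, with values encoded in nat. *)
Definition RV := nat -> nat.

Definition jv (Xs : list RV) (w : nat) : list nat := map (fun X => X w) Xs.

Definition sumR (u : nat -> R) : R :=
  epsilon (inhabits 0) (fun l => infinite_sum u l).

Definition Pr (p : nat -> R) (Xs : list RV) (w : nat) : R :=
  sumR (fun w' => if list_eq_dec Nat.eq_dec (jv Xs w') (jv Xs w) then p w' else 0).

Definition entropy (p : nat -> R) (Xs : list RV) (h : R) : Prop :=
  infinite_sum (fun w => p w * - ln (Pr p Xs w)) h.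

Definition cond_entropy (p : nat -> R) (Xs Ys : list RV) (h : R) : Prop :=
  infinite_sum (fun w => p w * - ln (Pr p (Xs ++ Ys) w / Pr p Ys w)) h.

(* J is a subset of the node index set {0,...,n-1} (nodes 1..n of the paper, shifted). *)
Definition subset_idx (n : nat) (J : list nat) : Prop :=
  NoDup J /\ (forall j, In j J -> (j < n)%nat).

Definition regen_code (n k d : nat) (p : nat -> R) (M : RV) (W : nat -> RV)
    (S : nat -> nat -> RV) (B alpha beta : R) : Prop :=
  entropy p (M :: nil) B /\
  (forall j, (j < n)%nat -> entropy p (W j :: nil) alpha) /\
  (forall j, (j < n)%nat -> cond_entropy p (W j :: nil) (M :: nil) 0) /\
  (forall J, subset_idx n J -> (k <= length J)%nat ->
      cond_entropy p (M :: nil) (map W J) 0) /\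
  (forall i j, (i < n)%nat -> (j < n)%nat -> i <> j ->
      entropy p (S i j :: nil) beta) /\
  (forall i j, (i < n)%nat -> (j < n)%nat -> i <> j ->
      cond_entropy p (S i j :: nil) (W i :: nil) 0) /\
  (forall j I, (j < n)%nat -> subset_idx n I -> ~ In j I -> (d <= length I)%nat ->
      cond_entropy p (W j :: nil) (map (fun i => S i j) I) 0).

From Stdlib Require Import Reals List Permutation.
From Stdlib Require Import Lra Lia ClassicalEpsilon Classical FunctionalExtensionality.
Import ListNotations.
Open Scope R_scope.

(* Single out node 1 and write s_X for the repair data it sends to the nodes in X.
   Keeping the store of node 4 and receiving s_{0,2,3}, the nodes 3, 0, 2 can be repaired
   in turn with only three further transfers, so B <= alpha + H(s_{0,2,3}) + 3 beta.
   For two further nodes a in X and b in Y, node b and s_X repair a with two more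
   transfers, and symmetrically; by submodularity this bounds H(W_a, W_b, s_{X u Y}), and
   comparing it with B <= H(W_1, W_a, W_b) + beta (node 1 determines s_{X u Y}) and with
   B <= H(W_a, W_b) + 3 beta gives 2 B <= 3 alpha + 8 beta + H(s_X) + H(s_Y) - H(s_{X u Y}).
   With (a, X, b, Y) = (3, {3}, 2, {0,2}) and (0, {0}, 2, {2}) the joint terms telescope
   against the first bound, leaving 5 B <= 7 alpha + 19 beta + H(s_0) + H(s_2) + H(s_3).
   Submodularity itself comes from Gibbs' inequality ln x <= x - 1 on the sample space. *)

Lemma partial_sum_le (f : nat -> R) : (forall n, 0 <= f n) ->
  forall m n, (m <= n)%nat -> sum_f_R0 f m <= sum_f_R0 f n.
Proof.
  intros f_ge0 m n Hmn; induction Hmn as [|n _ IH]; [lra|].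
  rewrite tech5; specialize (f_ge0 (S n)); lra.
Qed.

Lemma partial_sum_le_lim (f : nat -> R) l : (forall n, 0 <= f n) -> infinite_sum f l ->
  forall n, sum_f_R0 f n <= l.
Proof.
  intros f_ge0 Hl n; apply Rnot_lt_le; intros Hlt.
  destruct (Hl (sum_f_R0 f n - l)) as [N HN]; [lra|].
  specialize (HN (max N n) (Nat.le_max_l _ _)).
  assert (sum_f_R0 f n <= sum_f_R0 f (max N n)) by (apply partial_sum_le; auto; lia).
  unfold R_dist in HN; apply Rabs_def2 in HN; lra.
Qed.

Lemma term_le_lim (f : nat -> R) l : (forall n, 0 <= f n) -> infinite_sum f l ->
  forall k, f k <= l.
Proof.
  intros f_ge0 Hl k; apply Rle_trans with (sum_f_R0 f k); [|now apply partial_sum_le_lim].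
  destruct k as [|k]; simpl; [lra|].
  assert (0 <= sum_f_R0 f k) by (apply cond_pos_sum; auto); lra.
Qed.

Lemma infinite_sum_of_bounded (f : nat -> R) K : (forall n, 0 <= f n) ->
  (forall n, sum_f_R0 f n <= K) -> exists l, infinite_sum f l.
Proof.
  intros f_ge0 HK; destruct (growing_cv (sum_f_R0 f)) as [l Hl].
  - intros n; rewrite tech5; specialize (f_ge0 (S n)); lra.
  - exists K; intros x [n ->]; auto.
  - now exists l.
Qed.

Lemma sumR_spec (f : nat -> R) : (exists l, infinite_sum f l) -> infinite_sum f (sumR f).
Proof. intros H; unfold sumR; now apply epsilon_spec. Qed.

Lemma sumR_eq (f : nat -> R) l : infinite_sum f l -> sumR f = l.
Proof. intros H; apply uniqueness_sum with f; auto; apply sumR_spec; eauto. Qed.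

Lemma infinite_sum_le (f g : nat -> R) a b : (forall n, f n <= g n) ->
  infinite_sum f a -> infinite_sum g b -> a <= b.
Proof.
  intros Hfg Ha Hb; apply (Rle_cv_lim (Un := sum_f_R0 f) (Vn := sum_f_R0 g)); auto.
  intros n; now apply sum_Rle.
Qed.

Lemma infinite_sum_ext (f g : nat -> R) a : (forall n, f n = g n) ->
  infinite_sum f a -> infinite_sum g a.
Proof.
  intros Hfg Ha e He; destruct (Ha e He) as [N HN]; exists N; intros n Hn.
  replace (sum_f_R0 g n) with (sum_f_R0 f n); [auto|].
  now apply sum_eq.
Qed.

Lemma infinite_sum_plus (f g : nat -> R) a b :
  infinite_sum f a -> infinite_sum g b -> infinite_sum (fun n => f n + g n) (a + b).
Proof.
  intros Ha Hb e He; destruct (CV_plus _ _ _ _ Ha Hb e He) as [N HN]; exists N.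
  intros n Hn; rewrite sum_plus; auto.
Qed.

Lemma infinite_sum_minus (f g : nat -> R) a b :
  infinite_sum f a -> infinite_sum g b -> infinite_sum (fun n => f n - g n) (a - b).
Proof.
  intros Ha Hb e He; destruct (CV_minus _ _ _ _ Ha Hb e He) as [N HN]; exists N.
  intros n Hn; rewrite minus_sum; auto.
Qed.

Lemma Un_cv_const c : Un_cv (fun _ => c) c.
Proof. intros e He; exists 0%nat; intros; unfold R_dist; rewrite Rminus_diag, Rabs_R0; lra. Qed.

Definition indicator (P : Prop) (x : R) : R := if excluded_middle_informative P then x else 0.

Lemma indicator_true (P : Prop) x : P -> indicator P x = x.
Proof. intros H; unfold indicator; destruct (excluded_middle_informative P); tauto. Qed.

Lemma indicator_false (P : Prop) x : ~ P -> indicator P x = 0.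
Proof. intros H; unfold indicator; destruct (excluded_middle_informative P); tauto. Qed.

Lemma indicator_bounds (P : Prop) x : 0 <= x -> 0 <= indicator P x <= x.
Proof. intros H; unfold indicator; destruct (excluded_middle_informative P); lra. Qed.

Definition prob (p : nat -> R) (E : nat -> Prop) : R := sumR (fun w => indicator (E w) (p w)).

Section Probability.

Variable p : nat -> R.
Hypothesis Hp : prob_space p.

Let p_ge0 w : 0 <= p w := proj1 Hp w.

Lemma indicator_ge0 (P : Prop) w : 0 <= indicator P (p w).
Proof. apply indicator_bounds, p_ge0. Qed.

Lemma partial_sum_le_1 n : sum_f_R0 p n <= 1.
Proof. apply partial_sum_le_lim; [exact p_ge0 | apply Hp]. Qed.

Lemma prob_infinite_sum E : infinite_sum (fun w => indicator (E w) (p w)) (prob p E).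
Proof.
  apply sumR_spec, infinite_sum_of_bounded with 1; [intros; apply indicator_ge0|].
  intros n; apply Rle_trans with (sum_f_R0 p n); [|apply partial_sum_le_1].
  apply sum_Rle; intros; apply indicator_bounds, p_ge0.
Qed.

Lemma partial_sum_le_prob E n : sum_f_R0 (fun w => indicator (E w) (p w)) n <= prob p E.
Proof. apply partial_sum_le_lim; [intros; apply indicator_ge0 | apply prob_infinite_sum]. Qed.

Lemma prob_ge_point (E : nat -> Prop) w : E w -> p w <= prob p E.
Proof.
  intros Ew; rewrite <- (indicator_true (E w) (p w) Ew).
  apply (term_le_lim (fun w => indicator (E w) (p w))); [intros; apply indicator_ge0|].
  apply prob_infinite_sum.
Qed.

Lemma prob_ge0 E : 0 <= prob p E.
Proof.
  apply Rle_trans with (sum_f_R0 (fun w => indicator (E w) (p w)) 0);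
    [apply indicator_ge0 | apply partial_sum_le_prob].
Qed.

Lemma prob_le1 E : prob p E <= 1.
Proof.
  apply (infinite_sum_le (fun w => indicator (E w) (p w)) p);
    [intros; apply indicator_bounds, p_ge0 | apply prob_infinite_sum | apply Hp].
Qed.

Lemma prob_mono (E E' : nat -> Prop) :
  (forall w, 0 < p w -> E w -> E' w) -> prob p E <= prob p E'.
Proof.
  intros HE; eapply infinite_sum_le; [|apply prob_infinite_sum..].
  intros w; cbv beta; unfold indicator.
  destruct (excluded_middle_informative (E w)), (excluded_middle_informative (E' w));
    destruct (p_ge0 w) as [Hw|Hw]; try lra; exfalso; auto.
Qed.

Lemma prob_ext (E E' : nat -> Prop) :
  (forall w, 0 < p w -> (E w <-> E' w)) -> prob p E = prob p E'.
Proof. intros HE; apply Rle_antisym; apply prob_mono; firstorder. Qed.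

Lemma prob_add_point (E E' : nat -> Prop) w0 :
  (forall w, E w -> E' w) -> E' w0 -> ~ E w0 -> prob p E + p w0 <= prob p E'.
Proof.
  intros HE H1 H2.
  assert (Hsplit := infinite_sum_plus _ _ _ _ (prob_infinite_sum E)
    (prob_infinite_sum (fun w => E' w /\ ~ E w))).
  apply infinite_sum_ext with (g := fun w => indicator (E' w) (p w)) in Hsplit.
  - rewrite (uniqueness_sum _ _ _ (prob_infinite_sum E') Hsplit).
    assert (p w0 <= prob p (fun w => E' w /\ ~ E w)) by (apply prob_ge_point; auto); lra.
  - intros w; unfold indicator.
    destruct (excluded_middle_informative (E w)),
      (excluded_middle_informative (E' w /\ ~ E w)),
      (excluded_middle_informative (E' w)); try lra; firstorder.
Qed.

Lemma prob_True : prob p (fun _ => True) = 1.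
Proof.
  apply uniqueness_sum with (fun w => indicator True (p w)); [apply prob_infinite_sum|].
  apply infinite_sum_ext with p; [intros; now rewrite indicator_true | apply Hp].
Qed.

End Probability.

(** * Functional dependence *)

Definition agree (L : list RV) (w w' : nat) : Prop := forall Z, In Z L -> Z w' = Z w.

Lemma jv_eq_iff L w w' : jv L w' = jv L w <-> agree L w w'.
Proof.
  unfold agree, jv; induction L as [|X L IH]; simpl; split.
  - intros _ Z [].
  - auto.
  - intros H; injection H as H1 H2; intros Z [<-|HZ]; auto; now apply IH.
  - intros H; f_equal; [apply H; auto | apply IH; intros; apply H; auto].
Qed.

Lemma Pr_prob p L w : Pr p L w = prob p (agree L w).
Proof.
  unfold Pr, prob; f_equal; apply functional_extensionality; intros w'.
  destruct (list_eq_dec Nat.eq_dec (jv L w') (jv L w)) as [e|n].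
  - rewrite indicator_true; auto; now apply jv_eq_iff.
  - rewrite indicator_false; auto; now rewrite <- jv_eq_iff.
Qed.

Definition dep (p : nat -> R) (X Y : list RV) : Prop :=
  forall w w', 0 < p w -> 0 < p w' -> agree Y w w' -> agree X w w'.

Lemma dep_incl p X Y : incl X Y -> dep p X Y.
Proof. intros H w w' _ _ HY Z HZ; apply HY, H, HZ. Qed.

Lemma dep_in p Z L : In Z L -> dep p [Z] L.
Proof. intros H; apply dep_incl; intros Z' [<-|[]]; auto. Qed.

Lemma dep_trans p X Y Z : dep p X Y -> dep p Y Z -> dep p X Z.
Proof. intros H1 H2 w w' a b c; apply H1; auto. Qed.

Lemma dep_app p X1 X2 Y : dep p X1 Y -> dep p X2 Y -> dep p (X1 ++ X2) Y.
Proof.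
  intros H1 H2 w w' a b c Z HZ; apply in_app_or in HZ as [HZ|HZ];
    [apply (H1 w w') | apply (H2 w w')]; auto.
Qed.

Lemma dep_cons p A X Y : dep p [A] Y -> dep p X Y -> dep p (A :: X) Y.
Proof. apply (dep_app p [A] X Y). Qed.

Lemma dep_map p (f : nat -> RV) (l : list nat) Y :
  (forall i, In i l -> dep p [f i] Y) -> dep p (map f l) Y.
Proof.
  induction l as [|i l IH]; intros H; simpl; [now apply dep_incl|].
  apply dep_cons; [apply H; simpl; auto | apply IH; intros; apply H; simpl; auto].
Qed.

Lemma ln_le x y : 0 < x -> x <= y -> ln x <= ln y.
Proof. intros Hx [H|H]; [left; now apply ln_increasing | rewrite H; lra]. Qed.

Lemma neg_ln_ratio_ge0 a b : 0 < a -> a <= b -> 0 <= - ln (a / b).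
Proof.
  intros Ha Hab; enough (ln (a / b) <= ln 1) by (rewrite ln_1 in *; lra).
  apply ln_le; [apply Rdiv_lt_0_compat; lra|].
  apply Rmult_le_reg_r with b; [lra|]; field_simplify; lra.
Qed.

Lemma ln_ratio_eq0 a b : 0 < a -> 0 < b -> ln (a / b) = 0 -> a = b.
Proof.
  intros Ha Hb H; apply (f_equal exp) in H.
  rewrite exp_ln, exp_0 in H by (apply Rdiv_lt_0_compat; lra).
  apply Rmult_eq_reg_r with (/ b); [rewrite Rinv_r; lra | apply Rinv_neq_0_compat; lra].
Qed.

Lemma infinite_sum_0_terms (f : nat -> R) : (forall n, 0 <= f n) ->
  infinite_sum f 0 -> forall n, f n = 0.
Proof. intros f_ge0 Hf n; apply Rle_antisym; [now apply term_le_lim | apply f_ge0]. Qed.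

Section Dependence.

Variable p : nat -> R.
Hypothesis Hp : prob_space p.

Lemma Pr_pos L w : 0 < p w -> 0 < Pr p L w.
Proof.
  intros Hw; rewrite Pr_prob; apply Rlt_le_trans with (p w); auto.
  now apply prob_ge_point.
Qed.

Lemma Pr_le1 L w : Pr p L w <= 1.
Proof. rewrite Pr_prob; now apply prob_le1. Qed.

Lemma Pr_app_le L L' w : Pr p (L ++ L') w <= Pr p L' w.
Proof.
  rewrite !Pr_prob; apply prob_mono; auto.
  intros w' _ H Z HZ; apply H, in_or_app; auto.
Qed.

Lemma Pr_le_of_dep X Y w : dep p X Y -> 0 < p w -> Pr p Y w <= Pr p X w.
Proof. intros H Hw; rewrite !Pr_prob; apply prob_mono; auto. Qed.

Lemma cond_term_ge0 X Y w : 0 <= p w * - ln (Pr p (X ++ Y) w / Pr p Y w).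
Proof.
  destruct (proj1 Hp w) as [Hw|Hw]; [|rewrite <- Hw; lra].
  apply Rmult_le_pos; [lra|]; apply neg_ln_ratio_ge0; [now apply Pr_pos | apply Pr_app_le].
Qed.

Lemma dep_of_cond_entropy0 X Y : cond_entropy p X Y 0 -> dep p X Y.
Proof.
  intros H w w' Hw Hw' Hag.
  assert (Heq : Pr p (X ++ Y) w = Pr p Y w).
  { assert (H0 := infinite_sum_0_terms _ (cond_term_ge0 X Y) H w); cbv beta in H0.
    apply Rmult_integral in H0 as [H0|H0]; [lra|].
    apply ln_ratio_eq0; [now apply Pr_pos.. | lra]. }
  apply NNPP; intros HX; rewrite !Pr_prob in Heq.
  assert (prob p (agree (X ++ Y) w) + p w' <= prob p (agree Y w)); [|lra].
  apply prob_add_point; auto.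
  - intros v Hv Z HZ; apply Hv, in_or_app; auto.
  - intros Hc; apply HX; intros Z HZ; apply Hc, in_or_app; auto.
Qed.

End Dependence.

(** * Submodularity of entropy *)

Lemma sum_f_R0_zero n : sum_f_R0 (fun _ => 0) n = 0.
Proof. induction n as [|n IH]; simpl; lra. Qed.

Lemma sum_f_R0_swap (f : nat -> nat -> R) n m :
  sum_f_R0 (fun i => sum_f_R0 (fun j => f i j) m) n =
  sum_f_R0 (fun j => sum_f_R0 (fun i => f i j) n) m.
Proof.
  induction n as [|n IH]; [simpl; now apply sum_eq|].
  rewrite tech5, IH, <- sum_plus; apply sum_eq; intros; now rewrite tech5.
Qed.

Lemma sum_f_R0_scal c (f : nat -> R) n :
  c * sum_f_R0 f n = sum_f_R0 (fun i => c * f i) n.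
Proof. rewrite scal_sum; apply sum_eq; intros; ring. Qed.

Lemma sum_f_R0_mult (f g : nat -> R) n m :
  sum_f_R0 f n * sum_f_R0 g m = sum_f_R0 (fun i => sum_f_R0 (fun j => f i * g j) m) n.
Proof.
  rewrite Rmult_comm, scal_sum; apply sum_eq; intros i _; cbv beta.
  rewrite sum_f_R0_scal; apply sum_eq; intros; ring.
Qed.

Lemma Un_cv_sum_f_R0 (g : nat -> nat -> R) (l : nat -> R) n :
  (forall w, Un_cv (fun K => g K w) (l w)) ->
  Un_cv (fun K => sum_f_R0 (g K) n) (sum_f_R0 l n).
Proof. intros H; induction n as [|n IH]; simpl; [apply H | now apply CV_plus]. Qed.

Lemma agree_app L L' w x : agree (L ++ L') w x <-> agree L w x /\ agree L' w x.
Proof.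
  unfold agree; split.
  - intros H; split; intros Z HZ; apply H, in_or_app; auto.
  - intros [H1 H2] Z HZ; apply in_app_or in HZ as [HZ|HZ]; auto.
Qed.

Lemma Rdiv_ge0 a b : 0 <= a -> 0 <= b -> 0 <= a / b.
Proof.
  intros Ha [Hb|Hb]; [apply Rmult_le_pos; [|left; apply Rinv_0_lt_compat]; auto|].
  rewrite <- Hb; unfold Rdiv; rewrite Rinv_0, Rmult_0_r; lra.
Qed.

Section Gibbs.

Variable p : nat -> R.
Hypothesis Hp : prob_space p.
Variables A Bl C : list RV.

Let p_ge0 w : 0 <= p w := proj1 Hp w.

Lemma Pr_ge0 L w : 0 <= Pr p L w.
Proof. rewrite Pr_prob; now apply prob_ge0. Qed.

Lemma Pr_eq_of_agree L w w' : agree L w w' -> Pr p L w = Pr p L w'.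
Proof.
  intros H; rewrite !Pr_prob; apply prob_ext; auto.
  intros x _; split; intros Hx Z HZ; rewrite Hx, H; auto.
Qed.

Let gibbs_weight w := p w / (Pr p (A ++ Bl ++ C) w * Pr p C w).

Lemma Pr_joint_class u v w : agree (A ++ C) w u -> agree (Bl ++ C) w v ->
  Pr p (A ++ Bl ++ C) w = prob p (fun x => agree (A ++ C) x u /\ agree (Bl ++ C) x v).
Proof.
  intros Ha Hb; rewrite Pr_prob; apply prob_ext; auto; intros x _.
  rewrite agree_app in Ha, Hb; destruct Ha as [HaA HaC], Hb as [HbB HbC].
  rewrite !agree_app; split.
  - intros [HA [HB HC]]; repeat split; intros Z HZ; [rewrite HaA, HA | rewrite HaC, HC
      | rewrite HbB, HB | rewrite HbC, HC]; auto.
  - intros [[HA HC] [HB _]]; repeat split; intros Z HZ;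
      [rewrite <- HA, HaA | rewrite <- HB, HbB | rewrite <- HC, HaC]; auto.
Qed.

(* For [agree C u v], the outcomes agreeing with [u] on [A ++ C] and with [v] on [Bl ++ C]
   form one class [E] of [A ++ Bl ++ C]; each term below is [p w] times a constant on [E]. *)
Lemma joint_class_sum_le u v n : agree C u v ->
  sum_f_R0 (fun w => gibbs_weight w *
     (indicator (agree (A ++ C) w u) (p u) * indicator (agree (Bl ++ C) w v) (p v))) n
  <= p u * p v / Pr p C u.
Proof.
  intros Huv.
  set (E := fun x => agree (A ++ C) x u /\ agree (Bl ++ C) x v).
  set (K0 := p u * p v / (prob p E * Pr p C u)).
  assert (Hterm : forall w, gibbs_weight w *
      (indicator (agree (A ++ C) w u) (p u) * indicator (agree (Bl ++ C) w v) (p v))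
      = indicator (E w) (p w) * K0).
  { intros w; unfold gibbs_weight; destruct (classic (E w)) as [HE|HE].
    - assert (Ha := proj1 HE); assert (Hb := proj2 HE).
      rewrite !indicator_true by auto.
      rewrite (Pr_joint_class u v), (Pr_eq_of_agree C w u)
        by (auto; intros Z HZ; apply Ha, in_or_app; auto).
      unfold K0, E, Rdiv; ring.
    - rewrite (indicator_false (E w)) by auto.
      destruct (classic (agree (A ++ C) w u)) as [Ha|Ha].
      + rewrite (indicator_false (agree (Bl ++ C) w v)) by (intros Hb; apply HE; now split).
        ring.
      + rewrite (indicator_false (agree (A ++ C) w u)) by auto; ring. }
  rewrite (sum_eq _ _ _ (fun w _ => Hterm w)), <- scal_sum.
  assert (Hsum := partial_sum_le_prob p Hp E n).
  assert (HPE := prob_ge0 p Hp E); assert (HPC := Pr_ge0 C u).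
  assert (HK0 : 0 <= K0) by (apply Rdiv_ge0; [apply Rmult_le_pos | apply Rmult_le_pos]; auto).
  apply Rle_trans with (K0 * prob p E); [now apply Rmult_le_compat_l|].
  destruct (p_ge0 u) as [Hu|Hu].
  - assert (0 < Pr p C u) by (apply Pr_pos; auto).
    destruct (Req_dec (prob p E) 0) as [H0|H0].
    + rewrite H0, Rmult_0_r; apply Rdiv_ge0; [apply Rmult_le_pos|]; auto.
    + right; unfold K0; field; split; lra.
  - unfold K0; rewrite <- Hu, !Rmult_0_l; unfold Rdiv; rewrite !Rmult_0_l; lra.
Qed.

Lemma joint_sum_le u v n :
  sum_f_R0 (fun w => gibbs_weight w *
     (indicator (agree (A ++ C) w u) (p u) * indicator (agree (Bl ++ C) w v) (p v))) n
  <= p u * indicator (agree C u v) (p v) / Pr p C u.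
Proof.
  destruct (classic (agree C u v)) as [Huv|Huv].
  - rewrite indicator_true by auto; now apply joint_class_sum_le.
  - rewrite indicator_false, Rmult_0_r by auto; unfold Rdiv; rewrite Rmult_0_l.
    right; rewrite <- (sum_f_R0_zero n); apply sum_eq; intros w _.
    destruct (classic (agree (A ++ C) w u)) as [Ha|Ha];
      [|rewrite (indicator_false _ _ Ha); ring].
    destruct (classic (agree (Bl ++ C) w v)) as [Hb|Hb];
      [|rewrite (indicator_false _ _ Hb); ring].
    exfalso; apply Huv; intros Z HZ.
    rewrite (Hb Z), (Ha Z); auto; apply in_or_app; auto.
Qed.

Lemma truncated_gibbs_le1 n K :
  sum_f_R0 (fun w => gibbs_weight w *
     sum_f_R0 (fun u => indicator (agree (A ++ C) w u) (p u)) K *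
     sum_f_R0 (fun v => indicator (agree (Bl ++ C) w v) (p v)) K) n <= 1.
Proof.
  set (a := fun w u => indicator (agree (A ++ C) w u) (p u)).
  set (b := fun w v => indicator (agree (Bl ++ C) w v) (p v)).
  transitivity (sum_f_R0 (fun u => sum_f_R0 (fun v =>
    sum_f_R0 (fun w => gibbs_weight w * (a w u * b w v)) n) K) K).
  - right; transitivity (sum_f_R0 (fun w => sum_f_R0 (fun u => sum_f_R0 (fun v =>
      gibbs_weight w * (a w u * b w v)) K) K) n).
    + apply sum_eq; intros w _; cbv beta.
      rewrite Rmult_assoc, sum_f_R0_mult, (sum_f_R0_scal (gibbs_weight w)).
      apply sum_eq; intros u _; rewrite sum_f_R0_scal; apply sum_eq; intros; unfold a, b; ring.
    + rewrite (sum_f_R0_swap (fun w u => sum_f_R0 (fun v => _) K)).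
      apply sum_eq; intros u _; apply (sum_f_R0_swap (fun w v => _)).
  - apply Rle_trans with (sum_f_R0 (fun u =>
      p u / Pr p C u * sum_f_R0 (fun v => indicator (agree C u v) (p v)) K) K).
    + apply sum_Rle; intros u _; rewrite sum_f_R0_scal; apply sum_Rle; intros v _.
      apply Rle_trans with (1 := joint_sum_le u v n); right; unfold Rdiv; ring.
    + apply Rle_trans with (sum_f_R0 p K); [|now apply partial_sum_le_1].
      apply sum_Rle; intros u _; destruct (p_ge0 u) as [Hu|Hu].
      * assert (HPC := Pr_pos p Hp C u Hu).
        assert (Hs := partial_sum_le_prob p Hp (agree C u) K); rewrite <- Pr_prob in Hs.
        apply Rle_trans with (p u / Pr p C u * Pr p C u); [|right; field; lra].
        apply Rmult_le_compat_l; auto; apply Rdiv_ge0; lra.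
      * rewrite <- Hu; unfold Rdiv; rewrite !Rmult_0_l; lra.
Qed.

Lemma gibbs_le1 n :
  sum_f_R0 (fun w => p w * (Pr p (A ++ C) w * Pr p (Bl ++ C) w /
    (Pr p (A ++ Bl ++ C) w * Pr p C w))) n <= 1.
Proof.
  apply (Rle_cv_lim (Vn := fun _ => 1) (Un := fun K => sum_f_R0 (fun w => gibbs_weight w *
     sum_f_R0 (fun u => indicator (agree (A ++ C) w u) (p u)) K *
     sum_f_R0 (fun v => indicator (agree (Bl ++ C) w v) (p v)) K) n));
    [apply truncated_gibbs_le1| |apply Un_cv_const].
  replace (sum_f_R0 _ n) with (sum_f_R0 (fun w =>
    gibbs_weight w * Pr p (A ++ C) w * Pr p (Bl ++ C) w) n)
    by (apply sum_eq; intros; unfold gibbs_weight, Rdiv; ring).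
  apply (Un_cv_sum_f_R0 (fun K w => _)); intros w.
  apply CV_mult; [apply CV_mult; [apply Un_cv_const|]|]; rewrite Pr_prob;
    apply (prob_infinite_sum p Hp).
Qed.

End Gibbs.

Definition eterm (p : nat -> R) (L : list RV) (w : nat) : R := p w * - ln (Pr p L w).

Definition ent (p : nat -> R) (L : list RV) : R := sumR (eterm p L).

Lemma ent_of p L h : entropy p L h -> ent p L = h.
Proof. apply sumR_eq. Qed.

Lemma ln_le_sub1 x : 0 < x -> ln x <= x - 1.
Proof. intros Hx; assert (H := exp_ineq1_le (ln x)); rewrite exp_ln in H; lra. Qed.

Section Entropy.

Variable p : nat -> R.
Hypothesis Hp : prob_space p.

Lemma eterm_ge0 L w : 0 <= eterm p L w.
Proof.
  unfold eterm; rewrite <- (Rdiv_1_r (Pr p L w)).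
  destruct (proj1 Hp w) as [Hw|Hw]; [|rewrite <- Hw; lra].
  apply Rmult_le_pos; [lra|]; apply neg_ln_ratio_ge0; [now apply Pr_pos | now apply Pr_le1].
Qed.

Lemma eterm_le_of_dep X Y w : dep p X Y -> eterm p X w <= eterm p Y w.
Proof.
  intros H; unfold eterm; destruct (proj1 Hp w) as [Hw|Hw]; [|rewrite <- Hw; lra].
  apply Rmult_le_compat_l; [lra|]; apply Ropp_le_contravar, ln_le;
    [now apply Pr_pos | now apply Pr_le_of_dep].
Qed.

Lemma ent_eq_of_dep X Y : dep p X Y -> dep p Y X -> ent p X = ent p Y.
Proof.
  intros H1 H2; unfold ent; f_equal; apply functional_extensionality; intros w.
  apply Rle_antisym; now apply eterm_le_of_dep.
Qed.

Lemma ent_perm X Y : Permutation X Y -> ent p X = ent p Y.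
Proof.
  intros H; apply ent_eq_of_dep; apply dep_incl; intros Z HZ;
    [apply (Permutation_in _ H) | apply (Permutation_in _ (Permutation_sym H))]; auto.
Qed.

Lemma ent_nil : ent p [] = 0.
Proof.
  apply sumR_eq, infinite_sum_ext with (fun _ => 0).
  - intros w; unfold eterm; rewrite Pr_prob.
    replace (prob p (agree [] w)) with 1; [rewrite ln_1; ring|].
    rewrite <- (prob_True p Hp); apply prob_ext; auto; intros; split; auto; intros _ Z [].
  - intros e He; exists 0%nat; intros n _; unfold R_dist.
    rewrite sum_f_R0_zero, Rminus_diag, Rabs_R0; lra.
Qed.

Variables (U : list RV) (hU : R).
Hypothesis HU : entropy p U hU.

Lemma ent_infinite_sum L : dep p L U -> infinite_sum (eterm p L) (ent p L).
Proof.
  intros HL; apply sumR_spec, infinite_sum_of_bounded with hU; [apply eterm_ge0|].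
  intros n; apply Rle_trans with (sum_f_R0 (eterm p U) n).
  - apply sum_Rle; intros; now apply eterm_le_of_dep.
  - apply partial_sum_le_lim; [apply eterm_ge0 | exact HU].
Qed.

Lemma ent_le_of_dep X Y : dep p Y U -> dep p X Y -> ent p X <= ent p Y.
Proof.
  intros HY HX; apply (infinite_sum_le (eterm p X) (eterm p Y)).
  - intros; now apply eterm_le_of_dep.
  - apply ent_infinite_sum, dep_trans with Y; auto.
  - now apply ent_infinite_sum.
Qed.

Section Submodularity.

Variables A Bl C : list RV.

Let ratio w := Pr p (A ++ C) w * Pr p (Bl ++ C) w / (Pr p (A ++ Bl ++ C) w * Pr p C w).

(* [ln r <= r - 1] applied to the ratio inside the conditional mutual information. *)
Lemma eterm_submod_ge w :
  p w - p w * ratio w <= eterm p (A ++ C) w + eterm p (Bl ++ C) w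
                         - eterm p (A ++ Bl ++ C) w - eterm p C w.
Proof.
  unfold eterm; destruct (proj1 Hp w) as [Hw|Hw]; [|rewrite <- Hw; lra].
  assert (h1 := Pr_pos p Hp (A ++ C) w Hw); assert (h2 := Pr_pos p Hp (Bl ++ C) w Hw).
  assert (h3 := Pr_pos p Hp (A ++ Bl ++ C) w Hw); assert (h4 := Pr_pos p Hp C w Hw).
  assert (Hr : 0 < ratio w) by (unfold ratio; apply Rdiv_lt_0_compat; apply Rmult_lt_0_compat; auto).
  assert (Hln : ln (ratio w) = ln (Pr p (A ++ C) w) + ln (Pr p (Bl ++ C) w)
                               - ln (Pr p (A ++ Bl ++ C) w) - ln (Pr p C w)).
  { unfold ratio, Rdiv; rewrite ln_mult, ln_mult, ln_Rinv, ln_mult; try ring;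
      auto using Rmult_lt_0_compat, Rinv_0_lt_compat. }
  assert (p w * ln (ratio w) <= p w * (ratio w - 1))
    by (apply Rmult_le_compat_l; [lra | now apply ln_le_sub1]).
  rewrite Hln in H; lra.
Qed.

Lemma ent_submod : dep p (A ++ Bl ++ C) U ->
  ent p (A ++ Bl ++ C) + ent p C <= ent p (A ++ C) + ent p (Bl ++ C).
Proof.
  intros HABC.
  assert (Hsum : forall L, incl L (A ++ Bl ++ C) -> infinite_sum (eterm p L) (ent p L)).
  { intros L HL; apply ent_infinite_sum, dep_trans with (A ++ Bl ++ C); auto.
    now apply dep_incl. }
  assert (HAC : incl (A ++ C) (A ++ Bl ++ C)) by (intros x; rewrite !in_app_iff; tauto).
  assert (HBC : incl (Bl ++ C) (A ++ Bl ++ C)) by (intros x; rewrite !in_app_iff; tauto).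
  assert (HC : incl C (A ++ Bl ++ C)) by (intros x; rewrite !in_app_iff; tauto).
  assert (Hlim := infinite_sum_minus _ _ _ _ (infinite_sum_minus _ _ _ _
    (infinite_sum_plus _ _ _ _ (Hsum _ HAC) (Hsum _ HBC)) (Hsum _ (incl_refl _))) (Hsum _ HC)).
  assert (Hcv := CV_minus _ _ _ _ (proj2 Hp) (Un_cv_const 1)); rewrite Rminus_diag in Hcv.
  enough (0 <= ent p (A ++ C) + ent p (Bl ++ C) - ent p (A ++ Bl ++ C) - ent p C) by lra.
  eapply Rle_cv_lim; [| exact Hcv | exact Hlim]; intros n; cbv beta.
  assert (Hgibbs : sum_f_R0 (fun w => p w * ratio w) n <= 1)
    by exact (gibbs_le1 p Hp A Bl C n).
  apply Rle_trans with (sum_f_R0 p n - sum_f_R0 (fun w => p w * ratio w) n); [lra|].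
  rewrite <- minus_sum; apply sum_Rle; intros; apply eterm_submod_ge.
Qed.

End Submodularity.

Lemma ent_app_le X Y : dep p (X ++ Y) U -> ent p (X ++ Y) <= ent p X + ent p Y.
Proof.
  intros H; assert (Hs := ent_submod X Y []); rewrite !app_nil_r, ent_nil in Hs.
  specialize (Hs H); lra.
Qed.

End Entropy.

(** * Regenerating codes *)

(* In lemma names, [msg] is M, [store] a node content W j, and [transfer] the repair data
   S i j sent from node i to node j. *)

Section RegeneratingCode.

Context {n k d : nat} {p : nat -> R} {M : RV} {W : nat -> RV} {S : nat -> nat -> RV}
  {B alpha beta : R}.
Hypothesis Hp : prob_space p.
Hypothesis code : regen_code n k d p M W S B alpha beta.

Lemma store_dep_msg j : (j < n)%nat -> dep p [W j] [M].
Proof. destruct code as (_ & _ & HWM & _); intros; now apply (dep_of_cond_entropy0 p Hp), HWM. Qed.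

Lemma transfer_dep_store i j : (i < n)%nat -> (j < n)%nat -> i <> j -> dep p [S i j] [W i].
Proof.
  destruct code as (_ & _ & _ & _ & _ & HSW & _); intros; now apply (dep_of_cond_entropy0 p Hp), HSW.
Qed.

Lemma transfer_dep_msg i j : (i < n)%nat -> (j < n)%nat -> i <> j -> dep p [S i j] [M].
Proof.
  intros Hi Hj Hij; apply dep_trans with [W i];
    [now apply transfer_dep_store | now apply store_dep_msg].
Qed.

Lemma store_dep_transfers j I : (j < n)%nat -> subset_idx n I -> ~ In j I ->
  (d <= length I)%nat -> dep p [W j] (map (fun i => S i j) I).
Proof.
  destruct code as (_ & _ & _ & _ & _ & _ & HWS); intros; now apply (dep_of_cond_entropy0 p Hp), HWS.
Qed.

Lemma msg_dep_stores J : subset_idx n J -> (k <= length J)%nat -> dep p [M] (map W J).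
Proof. destruct code as (_ & _ & _ & HMW & _); intros; now apply (dep_of_cond_entropy0 p Hp), HMW. Qed.

Lemma ent_msg : ent p [M] = B.
Proof. apply ent_of, code. Qed.

Lemma ent_store j : (j < n)%nat -> ent p [W j] = alpha.
Proof. intros; now apply ent_of, code. Qed.

Lemma ent_transfer i j : (i < n)%nat -> (j < n)%nat -> i <> j -> ent p [S i j] = beta.
Proof. intros; now apply ent_of, code. Qed.

Lemma ent_le_of_dep_msg X Y : dep p Y [M] -> dep p X Y -> ent p X <= ent p Y.
Proof. exact (ent_le_of_dep p Hp [M] B (proj1 code) X Y). Qed.

Lemma msg_le_ent_of_dep L : dep p [M] L -> dep p L [M] -> B <= ent p L.
Proof. intros H1 H2; rewrite <- ent_msg; now apply ent_le_of_dep_msg. Qed.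

Lemma ent_cons_le Z L h : ent p [Z] = h -> dep p (Z :: L) [M] -> ent p (Z :: L) <= h + ent p L.
Proof. intros HZ H; rewrite <- HZ; exact (ent_app_le p Hp [M] B (proj1 code) [Z] L H). Qed.

End RegeneratingCode.

Lemma labels_facts l : Permutation l (seq 0 5) -> NoDup l /\ Forall (fun i => (i < 5)%nat) l.
Proof.
  intros H; split; [apply (Permutation_NoDup (Permutation_sym H)), seq_NoDup|].
  apply Forall_forall; intros i Hi; apply (Permutation_in _ H), in_seq in Hi; lia.
Qed.

Ltac unpack_labels H :=
  let Hnd := fresh "Hnd" in let Hlt := fresh "Hlt" in
  destruct (labels_facts _ H) as [Hnd Hlt];
  repeat rewrite NoDup_cons_iff in Hnd; repeat rewrite Forall_cons_iff in Hlt; simpl in Hnd;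
  repeat match goal with
  | H' : ~ (_ \/ _) |- _ => apply Decidable.not_or in H'
  | H' : _ /\ _ |- _ => destruct H'
  end.

Ltac labels :=
  repeat match goal with H : In ?j ?X, HX : incl ?X _ |- _ => apply HX in H end;
  simpl in *;
  repeat match goal with
  | H : _ \/ _ |- _ => destruct H as [<-|H]
  | H : False |- _ => destruct H
  end;
  lazymatch goal with
  | |- subset_idx _ _ => split; [labels | intros ? ?; labels]
  | |- NoDup _ => repeat constructor; labels
  | |- ~ _ => let H := fresh in intro H; repeat destruct H as [H|H]; congruence
  | |- (_ <= _)%nat => auto
  | |- _ => first [assumption | congruence]
  end.

Section Code544.

Context {p : nat -> R} {M : RV} {W : nat -> RV} {S : nat -> nat -> RV} {B alpha beta : R}.
Hypothesis Hp : prob_space p.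
Hypothesis code : regen_code 5 4 4 p M W S B alpha beta.

Lemma store_dep_of j I L : (j < 5)%nat -> subset_idx 5 I -> ~ In j I -> (4 <= length I)%nat ->
  (forall i, In i I -> dep p [S i j] L) -> dep p [W j] L.
Proof.
  intros; apply dep_trans with (map (fun i => S i j) I);
    [now apply (store_dep_transfers Hp code) | now apply dep_map].
Qed.

Lemma transfer_dep_of i j L : (i < 5)%nat -> (j < 5)%nat -> i <> j -> dep p [W i] L ->
  dep p [S i j] L.
Proof. intros; apply dep_trans with [W i]; auto; now apply (transfer_dep_store Hp code). Qed.

Lemma msg_dep_of J L : subset_idx 5 J -> (4 <= length J)%nat ->
  (forall j, In j J -> dep p [W j] L) -> dep p [M] L.
Proof.
  intros; apply dep_trans with (map W J); [now apply (msg_dep_stores Hp code) | now apply dep_map].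
Qed.

Ltac in_list := simpl; repeat first [left; reflexivity | right]; apply in_map; assumption.

Ltac known := first [assumption | apply dep_in; in_list].

Ltac derive :=
  first [known | apply transfer_dep_of; [labels | labels | labels | known]].

Ltac derive_list :=
  repeat lazymatch goal with |- dep _ (_ :: _ :: _) _ => apply dep_cons; [derive|] end;
  derive.

Ltac derive_each :=
  let x := fresh "x" in let Hin := fresh "Hin" in
  intros x Hin; simpl in Hin;
  repeat (destruct Hin as [Hin|Hin]; [subst x; derive|]); destruct Hin.

Ltac dep_msg :=
  lazymatch goal with
  | |- dep _ (_ ++ _) _ => apply dep_app; dep_msg
  | |- dep _ (map _ _) _ => apply dep_map; intros ? ?; dep_msg
  | |- dep _ [W _] _ => apply (store_dep_msg Hp code); labels
  | |- dep _ [S _ _] _ => apply (transfer_dep_msg Hp code); labels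
  | |- dep _ (_ :: _) _ => apply dep_cons; dep_msg
  end.

Lemma ent_transfer_cons_bound i j L x : (i < 5)%nat -> (j < 5)%nat -> i <> j ->
  dep p L [M] -> ent p L <= x - beta -> ent p (S i j :: L) <= x.
Proof.
  intros; enough (ent p (S i j :: L) <= beta + ent p L) by lra.
  apply (ent_cons_le Hp code); [now apply (ent_transfer code)|].
  apply dep_cons; auto; now apply (transfer_dep_msg Hp code).
Qed.

Lemma ent_store_cons_bound j L x : (j < 5)%nat ->
  dep p L [M] -> ent p L <= x - alpha -> ent p (W j :: L) <= x.
Proof.
  intros; enough (ent p (W j :: L) <= alpha + ent p L) by lra.
  apply (ent_cons_le Hp code); [now apply (ent_store code)|].
  apply dep_cons; auto; now apply (store_dep_msg Hp code).
Qed.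

Ltac peel_transfers :=
  repeat lazymatch goal with
  | |- ent _ (S _ _ :: _) <= _ =>
      apply ent_transfer_cons_bound; [labels | labels | labels | dep_msg |]
  end.

Ltac peel_store := apply ent_store_cons_bound; [labels | dep_msg |].

Lemma msg_le_three_stores r a b c d : Permutation [r; a; b; c; d] (seq 0 5) ->
  B <= ent p [W r; W a; W b] + beta.
Proof.
  intros Hl; unpack_labels Hl.
  apply Rle_trans with (ent p [S d c; W r; W a; W b]).
  - apply (msg_le_ent_of_dep Hp code); [|dep_msg].
    assert (Wc : dep p [W c] [S d c; W r; W a; W b])
      by (apply (store_dep_of c [r; a; b; d]); [labels.. | derive_each]).
    apply (msg_dep_of [r; a; b; c]); [labels | labels | derive_each].
  - peel_transfers; lra.
Qed.

Lemma three_stores_le_two r a b c d : Permutation [r; a; b; c; d] (seq 0 5) ->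
  ent p [W r; W a; W b] <= ent p [W a; W b] + 2 * beta.
Proof.
  intros Hl; unpack_labels Hl.
  apply Rle_trans with (ent p [S c r; S d r; W a; W b]).
  - apply (ent_le_of_dep_msg Hp code); [dep_msg|].
    assert (Wr : dep p [W r] [S c r; S d r; W a; W b])
      by (apply (store_dep_of r [a; b; c; d]); [labels.. | derive_each]).
    derive_list.
  - peel_transfers; lra.
Qed.

Lemma msg_le_two_stores r a b c d : Permutation [r; a; b; c; d] (seq 0 5) ->
  B <= ent p [W a; W b] + 3 * beta.
Proof.
  intros Hl; assert (H1 := msg_le_three_stores r a b c d Hl).
  assert (H2 := three_stores_le_two r a b c d Hl); lra.
Qed.

(* Node [d] and the data [r] sends to [a], [b], [c] repair [a], then [b], then [c],
   missing only the three transfers [b -> a], [c -> a] and [c -> b]. *)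
Lemma msg_le_store_transfers r a b c d : Permutation [r; a; b; c; d] (seq 0 5) ->
  B <= alpha + ent p (map (S r) [a; b; c]) + 3 * beta.
Proof.
  intros Hl; unpack_labels Hl.
  apply Rle_trans with (ent p (S b a :: S c a :: S c b :: W d :: map (S r) [a; b; c])).
  - apply (msg_le_ent_of_dep Hp code); [|dep_msg].
    assert (Wa : dep p [W a] [S b a; S c a; S c b; W d; S r a; S r b; S r c])
      by (apply (store_dep_of a [r; b; c; d]); [labels.. | derive_each]).
    assert (Wb : dep p [W b] [S b a; S c a; S c b; W d; S r a; S r b; S r c])
      by (apply (store_dep_of b [r; a; c; d]); [labels.. | derive_each]).
    assert (Wc : dep p [W c] [S b a; S c a; S c b; W d; S r a; S r b; S r c])
      by (apply (store_dep_of c [r; a; b; d]); [labels.. | derive_each]).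
    apply (msg_dep_of [a; b; c; d]); [labels | labels | derive_each].
  - peel_transfers; peel_store; lra.
Qed.

Lemma transfers_store_pair_le r a b c d X : Permutation [r; a; b; c; d] (seq 0 5) ->
  In a X -> incl X [a; b; c; d] ->
  ent p (map (S r) X ++ [W a; W b]) <= ent p (map (S r) X) + alpha + 2 * beta.
Proof.
  intros Hl Ha HX; unpack_labels Hl.
  apply Rle_trans with (ent p (S c a :: S d a :: W b :: map (S r) X)).
  - apply (ent_le_of_dep_msg Hp code); [dep_msg|].
    assert (Wa : dep p [W a] (S c a :: S d a :: W b :: map (S r) X))
      by (apply (store_dep_of a [r; b; c; d]); [labels.. | derive_each]).
    apply dep_app; [apply dep_incl; intros Z HZ; simpl; auto | derive_list].
  - peel_transfers; peel_store; lra.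
Qed.

Lemma msg_le_pair_transfers r a b c d Z : Permutation [r; a; b; c; d] (seq 0 5) ->
  incl Z [a; b; c; d] ->
  B <= alpha + ent p ([W a; W b] ++ map (S r) Z) - ent p (map (S r) Z) + beta.
Proof.
  intros Hl HZ; unpack_labels Hl.
  assert (Hsub := ent_submod p Hp [M] B (proj1 code) [W r] [W a; W b] (map (S r) Z)).
  specialize (Hsub ltac:(dep_msg)).
  assert (Hr : ent p ([W r] ++ map (S r) Z) = alpha).
  { rewrite <- (ent_store code r) by labels; apply (ent_eq_of_dep p Hp).
    - apply dep_cons; [known | apply dep_map; intros j Hj; apply transfer_dep_of; [labels.. | known]].
    - apply dep_incl; intros Z' [<-|[]]; simpl; auto. }
  assert (Hmono : ent p [W r; W a; W b] <= ent p ([W r] ++ [W a; W b] ++ map (S r) Z))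
    by (apply (ent_le_of_dep_msg Hp code); [dep_msg | apply dep_incl; intros Z' HZ'; simpl in *; tauto]).
  assert (Hthree := msg_le_three_stores r a b c d Hl); lra.
Qed.

Lemma two_msg_le_transfers_info r a b c d X Y : Permutation [r; a; b; c; d] (seq 0 5) ->
  In a X -> In b Y -> incl X [a; b; c; d] -> incl Y [a; b; c; d] ->
  2 * B <= 3 * alpha + ent p (map (S r) X) + ent p (map (S r) Y)
           - ent p (map (S r) (X ++ Y)) + 8 * beta.
Proof.
  intros Hl Ha Hb HX HY.
  assert (Hl' : Permutation [r; b; a; c; d] (seq 0 5))
    by (eapply perm_trans; [|exact Hl]; do 2 constructor).
  assert (HY' : incl Y [b; a; c; d]) by (intros j Hj; apply HY in Hj; simpl in *; tauto).
  assert (Hsub := ent_submod p Hp [M] B (proj1 code) (map (S r) X) (map (S r) Y) [W a; W b]).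
  specialize (Hsub ltac:(unpack_labels Hl; dep_msg)).
  assert (HXab := transfers_store_pair_le r a b c d X Hl Ha HX).
  assert (HYba := transfers_store_pair_le r b a c d Y Hl' Hb HY').
  rewrite (ent_perm p Hp (map (S r) Y ++ [W b; W a]) (map (S r) Y ++ [W a; W b])) in HYba
    by (apply Permutation_app_head; constructor).
  assert (HM := msg_le_pair_transfers r a b c d (X ++ Y) Hl (incl_app HX HY)).
  rewrite map_app, (ent_perm p Hp ([W a; W b] ++ map (S r) X ++ map (S r) Y)
    (map (S r) X ++ map (S r) Y ++ [W a; W b])) in HM
    by (rewrite (app_assoc (map (S r) X)); apply Permutation_app_comm).
  assert (H2 := msg_le_two_stores r a b c d Hl).
  rewrite map_app; lra.
Qed.

End Code544.

Ltac decide_labels :=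
  apply NoDup_Permutation; [repeat constructor; simpl; lia | apply seq_NoDup | simpl; lia].

Ltac incl_tac := intros ? ?; simpl in *; tauto.

Theorem mainTheorem11 (p : nat -> R) (M : RV) (W : nat -> RV) (S : nat -> nat -> RV)
    (B alpha beta : R) :
  prob_space p ->
  regen_code 5 4 4 p M W S B alpha beta ->
  5 * B <= 7 * alpha + 22 * beta.
Proof.
  intros Hp code.
  assert (Hcut := msg_le_store_transfers Hp code 1 3 0 2 4
    ltac:(decide_labels)).
  assert (H32 := two_msg_le_transfers_info Hp code 1 3 2 0 4 [3]%nat [0; 2]%nat
    ltac:(decide_labels) ltac:(simpl; tauto) ltac:(simpl; tauto) ltac:(incl_tac) ltac:(incl_tac)).
  assert (H02 := two_msg_le_transfers_info Hp code 1 0 2 3 4 [0]%nat [2]%nat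
    ltac:(decide_labels) ltac:(simpl; tauto) ltac:(simpl; tauto) ltac:(incl_tac) ltac:(incl_tac)).
  simpl in *; rewrite !(ent_transfer code 1) in * by lia; lra.
Qed.
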